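(* Fix $s>0$ and let $\Phi_s(x)=(1+e^{-sx})^{-1}$ and $\phi_s(x)=\Phi_s'(x)=se^{-sx}/(1+e^{-sx})^2$. Let $f:\mathbb{R}^3\to\mathbb{R}$ be a signed distance function whose zero-level set is a smooth surface $\mathbb{S}$, and let $\mathbf{p}(t)=\mathbf{o}+t\mathbf{v}$, $t\ge0$, be a ray with unit direction $\mathbf{v}$. Define $\sigma(t)=\phi_s(f(\mathbf{p}(t)))$, $T(t)=\exp\left(-\int_0^t\sigma(u)\,\mathrm{d}u\right)$ and $w(t)=T(t)\sigma(t)$. Let $t^*>0$ satisfy $f(\mathbf{p}(t^* ))=0$, and suppose that near $t^*$ the surface is tangentially approximated by a planar patch, i.e. $\nabla f(\mathbf{p}(t))$ is constant for $t$ in a neighborhood of $t^*$. Then $\frac{\mathrm{d}w}{\mathrm{d}t}(t^* )=-T(t^* )\phi_s(0)^2<0$; in particular $w$ does not attain a local maximum at $t^*$. *)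

From Stdlib Require Import Reals Lra.
From Coquelicot Require Import Coquelicot.
Open Scope R_scope.

Definition vec3 : Type := (R * R * R)%type.
Definition vadd (x y : vec3) : vec3 :=
  let '(x1, x2, x3) := x in let '(y1, y2, y3) := y in (x1 + y1, x2 + y2, x3 + y3).
Definition vscale (a : R) (x : vec3) : vec3 :=
  let '(x1, x2, x3) := x in (a * x1, a * x2, a * x3).
Definition vsub (x y : vec3) : vec3 := vadd x (vscale (-1) y).
Definition vdot (x y : vec3) : R :=
  let '(x1, x2, x3) := x in let '(y1, y2, y3) := y in x1 * y1 + x2 * y2 + x3 * y3.
Definition vnorm (x : vec3) : R := sqrt (vdot x x).

Definition Phi_s (s x : R) : R := / (1 + exp (- s * x)).
Definition phi_s (s x : R) : R := s * exp (- s * x) / (1 + exp (- s * x)) ^ 2.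

Definition signed_distance_function (f : vec3 -> R) : Prop :=
  forall x : vec3,
    (forall y, f y = 0 -> Rabs (f x) <= vnorm (vsub x y)) /\
    (forall eps, 0 < eps -> exists y, f y = 0 /\ vnorm (vsub x y) < Rabs (f x) + eps).

Definition has_gradient (f : vec3 -> R) (x g : vec3) : Prop :=
  forall eps, 0 < eps -> exists delta, 0 < delta /\
    forall y, vnorm (vsub y x) < delta ->
      Rabs (f y - f x - vdot g (vsub y x)) <= eps * vnorm (vsub y x).

Definition ray (o v : vec3) (t : R) : vec3 := vadd o (vscale t v).

Definition sigma_ray (s : R) (f : vec3 -> R) (o v : vec3) (t : R) : R :=
  phi_s s (f (ray o v t)).
Definition transmittance (s : R) (f : vec3 -> R) (o v : vec3) (t : R) : R :=
  exp (- RInt (sigma_ray s f o v) 0 t).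
Definition weight (s : R) (f : vec3 -> R) (o v : vec3) (t : R) : R :=
  transmittance s f o v t * sigma_ray s f o v t.

Definition local_max_at (w : R -> R) (t0 : R) : Prop :=
  exists delta, 0 < delta /\ forall t, Rabs (t - t0) < delta -> w t <= w t0.

(* At a zero [t*] of [f] along the ray the density [sigma = phi_s o f o p] is
   stationary, because the logistic density is even and hence [phi_s'(0) = 0],
   while [f o p] is differentiable there.  Differentiating [T] with the
   fundamental theorem of calculus (sigma is continuous, as [|f|] is 1-Lipschitz
   for a signed distance function) gives [T' = - T sigma], so
   [w' = T' sigma + T sigma' = - T sigma^2 = - T phi_s(0)^2 < 0] at [t*], and a
   point with nonzero derivative is no local maximum. *)
From Stdlib Require Import Reals Lra Psatz.
From Coquelicot Require Import Coquelicot.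
Open Scope R_scope.

Lemma vsub_ray o v a b : vsub (ray o v a) (ray o v b) = vscale (a - b) v.
Proof.
  destruct o as [[o1 o2] o3], v as [[v1 v2] v3].
  unfold vsub, ray, vadd, vscale; f_equal; [f_equal|]; ring.
Qed.

Lemma vsub_vadd_vsub x y z : vsub x z = vadd (vsub x y) (vsub y z).
Proof.
  destruct x as [[x1 x2] x3], y as [[y1 y2] y3], z as [[z1 z2] z3].
  unfold vsub, vadd, vscale; f_equal; [f_equal|]; ring.
Qed.

Lemma vdot_vscale_r x a y : vdot x (vscale a y) = a * vdot x y.
Proof. destruct x as [[x1 x2] x3], y as [[y1 y2] y3]; simpl; ring. Qed.

Lemma vdot_self_ge0 x : 0 <= vdot x x.
Proof. destruct x as [[x1 x2] x3]; simpl; nra. Qed.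

Lemma vdot_vadd_self x y :
  vdot (vadd x y) (vadd x y) = vdot x x + 2 * vdot x y + vdot y y.
Proof. destruct x as [[x1 x2] x3], y as [[y1 y2] y3]; simpl; ring. Qed.

Lemma vnorm_vscale a x : vnorm (vscale a x) = Rabs a * vnorm x.
Proof.
  unfold vnorm; rewrite vdot_vscale_r.
  replace (vdot (vscale a x) x) with (a * vdot x x)
    by (destruct x as [[x1 x2] x3]; simpl; ring).
  rewrite <- Rmult_assoc, sqrt_mult_alt by (pose proof (vdot_self_ge0 x); nra).
  now rewrite <- sqrt_Rsqr_abs.
Qed.

Lemma vdot_le_vnorm x y : vdot x y <= vnorm x * vnorm y.
Proof.
  unfold vnorm; rewrite <- sqrt_mult_alt by apply vdot_self_ge0.
  destruct (Rle_or_lt (vdot x y) 0) as [Hle | Hgt].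
  - pose proof (sqrt_pos (vdot x x * vdot y y)); lra.
  - rewrite <- (sqrt_square (vdot x y)) by lra.
    apply sqrt_le_1_alt.
    destruct x as [[x1 x2] x3], y as [[y1 y2] y3]; simpl.
    (* Lagrange's identity *)
    assert (E : (x1*x1 + x2*x2 + x3*x3) * (y1*y1 + y2*y2 + y3*y3)
                - (x1*y1 + x2*y2 + x3*y3) * (x1*y1 + x2*y2 + x3*y3)
              = (x1*y2 - x2*y1)^2 + (x1*y3 - x3*y1)^2 + (x2*y3 - x3*y2)^2) by ring.
    pose proof (pow2_ge_0 (x1*y2 - x2*y1)); pose proof (pow2_ge_0 (x1*y3 - x3*y1));
    pose proof (pow2_ge_0 (x2*y3 - x3*y2)); lra.
Qed.

Lemma vnorm_vadd_le x y : vnorm (vadd x y) <= vnorm x + vnorm y.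
Proof.
  assert (Hx : 0 <= vnorm x) by apply sqrt_pos.
  assert (Hy : 0 <= vnorm y) by apply sqrt_pos.
  rewrite <- (sqrt_square (vnorm x + vnorm y)) by lra.
  unfold vnorm at 1; apply sqrt_le_1_alt.
  rewrite vdot_vadd_self.
  pose proof (vdot_le_vnorm x y).
  pose proof (sqrt_sqrt _ (vdot_self_ge0 x)); pose proof (sqrt_sqrt _ (vdot_self_ge0 y)).
  unfold vnorm in *; nra.
Qed.

Lemma sdf_abs_le f x y : signed_distance_function f ->
  Rabs (f x) <= vnorm (vsub x y) + Rabs (f y).
Proof.
  intros Hf; apply Rle_plus_epsilon; intros eps Heps.
  destruct (proj2 (Hf y) eps Heps) as [z [Hz Hyz]].
  pose proof (proj1 (Hf x) z Hz) as Hxz.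
  rewrite (vsub_vadd_vsub x y z) in Hxz.
  pose proof (vnorm_vadd_le (vsub x y) (vsub y z)); lra.
Qed.

Section SignedDistanceAlongRay.

Variables (f : vec3 -> R) (o v : vec3).
Hypotheses (Hf : signed_distance_function f) (Hv : vnorm v = 1).

Lemma sdf_ray_abs_le a b :
  Rabs (f (ray o v a)) <= Rabs (a - b) + Rabs (f (ray o v b)).
Proof.
  pose proof (sdf_abs_le f (ray o v a) (ray o v b) Hf) as H.
  now rewrite vsub_ray, vnorm_vscale, Hv, Rmult_1_r in H.
Qed.

Lemma continuous_abs_sdf_ray t : continuous (fun u => Rabs (f (ray o v u))) t.
Proof.
  apply continuity_pt_filterlim; intros eps Heps.
  exists eps; split; [lra|]; intros u [_ Hu]; simpl in *; unfold R_dist in *.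
  pose proof (sdf_ray_abs_le u t); pose proof (sdf_ray_abs_le t u).
  rewrite (Rabs_minus_sym t u) in *; apply Rabs_def1; lra.
Qed.

End SignedDistanceAlongRay.

Lemma phi_s_opp s x : phi_s s (- x) = phi_s s x.
Proof.
  unfold phi_s; replace (- s * - x) with (s * x) by ring.
  replace (exp (- s * x)) with (/ exp (s * x))
    by (rewrite <- exp_Ropp; f_equal; ring).
  pose proof (exp_pos (s * x)); field; nra.
Qed.

Lemma phi_s_0 s : phi_s s 0 = s / 4.
Proof. unfold phi_s; rewrite Rmult_0_r, exp_0; field. Qed.

Lemma continuous_phi_s s x : continuous (phi_s s) x.
Proof.
  apply (@ex_derive_continuous R_AbsRing R_NormedModule); unfold phi_s; auto_derive.
  pose proof (exp_pos (- s * x)); nra.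
Qed.

Lemma is_derive_phi_s_0 s : is_derive (phi_s s) 0 0.
Proof.
  unfold phi_s; auto_derive; rewrite Rmult_0_r, exp_0; [lra | field].
Qed.

Lemma sigma_ray_abs s f o v t :
  sigma_ray s f o v t = phi_s s (Rabs (f (ray o v t))).
Proof.
  unfold sigma_ray, Rabs; destruct (Rcase_abs _); [rewrite phi_s_opp|]; reflexivity.
Qed.

Lemma continuous_sigma_ray s f o v t :
  signed_distance_function f -> vnorm v = 1 -> continuous (sigma_ray s f o v) t.
Proof.
  intros Hf Hv.
  apply (continuous_ext (fun u => phi_s s (Rabs (f (ray o v u))))).
  { intros u; symmetry; apply sigma_ray_abs. }
  apply (continuous_comp (fun u => Rabs (f (ray o v u))) (phi_s s)).
  - now apply continuous_abs_sdf_ray.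
  - apply continuous_phi_s.
Qed.

Lemma is_derive_comp_ray f o v t g :
  has_gradient f (ray o v t) g -> is_derive (fun u => f (ray o v u)) t (vdot g v).
Proof.
  intros Hg; apply is_derive_Reals; intros eps Heps.
  set (k := vnorm v + 1).
  assert (Hk : vnorm v < k) by (unfold k; lra).
  assert (Hk0 : 0 < k) by (pose proof (sqrt_pos (vdot v v)); unfold k, vnorm in *; lra).
  destruct (Hg (eps / (2 * k))) as [d [Hd Hfd]].
  { apply Rdiv_lt_0_compat; lra. }
  exists (mkposreal (d / k) (Rdiv_lt_0_compat _ _ Hd Hk0)); simpl; intros h Hh0 Hh.
  assert (Hpos : 0 < Rabs h) by now apply Rabs_pos_lt.
  assert (Hhv : Rabs h * vnorm v <= Rabs h * k) by (apply Rmult_le_compat_l; lra).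
  assert (Hhk : Rabs h * k < d).
  { apply (Rmult_lt_compat_r k) in Hh; [|lra].
    now replace (d / k * k) with d in Hh by (field; lra). }
  specialize (Hfd (ray o v (t + h))).
  rewrite vsub_ray, vnorm_vscale, vdot_vscale_r in Hfd.
  replace (t + h - t) with h in Hfd by ring.
  specialize (Hfd ltac:(lra)).
  assert (Hbound : eps / (2 * k) * (Rabs h * vnorm v) <= eps / 2 * Rabs h).
  { replace (eps / 2 * Rabs h) with (eps / (2 * k) * (Rabs h * k)) by (field; lra).
    apply Rmult_le_compat_l; [apply Rlt_le, Rdiv_lt_0_compat|]; lra. }
  replace ((f (ray o v (t + h)) - f (ray o v t)) / h - vdot g v)
    with ((f (ray o v (t + h)) - f (ray o v t) - h * vdot g v) / h) by (field; exact Hh0).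
  unfold Rdiv; rewrite Rabs_mult, Rabs_inv.
  apply (Rmult_lt_reg_r (Rabs h)); [exact Hpos|].
  rewrite Rmult_assoc, Rinv_l by lra; nra.
Qed.

Lemma is_derive_exp_opp_RInt (sg : R -> R) t :
  (forall x, continuous sg x) ->
  is_derive (fun u => exp (- RInt sg 0 u)) t (- exp (- RInt sg 0 t) * sg t).
Proof.
  intros Hsg.
  assert (DI : is_derive (RInt sg 0) t (sg t)).
  { apply (is_derive_RInt sg (RInt sg 0) 0); [|apply Hsg].
    apply filter_forall; intros b; apply (RInt_correct sg 0 b).
    apply ex_RInt_continuous; intros x _; apply Hsg. }
  pose proof (is_derive_comp exp (fun u => opp (RInt sg 0 u)) t _ _
                (is_derive_exp _) (is_derive_opp _ _ _ DI)) as D.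
  replace (- exp (- RInt sg 0 t) * sg t)
    with (scal (opp (sg t)) (exp (opp (RInt sg 0 t)))) by (cbn; unfold mult; cbn; ring).
  exact D.
Qed.

Lemma is_derive_sigma_ray_zero s f o v t g :
  f (ray o v t) = 0 -> has_gradient f (ray o v t) g ->
  is_derive (sigma_ray s f o v) t 0.
Proof.
  intros Hzero Hg.
  assert (Dphi : is_derive (phi_s s) (f (ray o v t)) 0)
    by (rewrite Hzero; apply is_derive_phi_s_0).
  pose proof (is_derive_comp _ _ t _ _ Dphi (is_derive_comp_ray f o v t g Hg)) as D.
  replace 0 with (scal (vdot g v) 0) by (cbn; unfold mult; cbn; ring).
  exact D.
Qed.

Lemma not_local_max_at_is_derive (w : R -> R) t l :
  is_derive w t l -> l <> 0 -> ~ local_max_at w t.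
Proof.
  intros Dw Hl [d [Hd Hmax]]; apply is_derive_Reals in Dw; apply Hl.
  exact (deriv_maximum w (t - d) (t + d) t (exist _ l Dw) ltac:(lra) ltac:(lra)
           (fun x H1 H2 => Hmax x ltac:(apply Rabs_def1; lra))).
Qed.

Theorem mainTheorem2 (s : R) (f : vec3 -> R) (o v : vec3) (tstar : R) :
  0 < s ->
  signed_distance_function f ->
  vnorm v = 1 ->
  0 < tstar ->
  f (ray o v tstar) = 0 ->
  (* planar patch near t*: the gradient of f along the ray is constant *)
  (exists delta g, 0 < delta /\
     forall t, Rabs (t - tstar) < delta -> has_gradient f (ray o v t) g) ->
  is_derive (weight s f o v) tstar
    (- transmittance s f o v tstar * (phi_s s 0) ^ 2) /\
  - transmittance s f o v tstar * (phi_s s 0) ^ 2 < 0 /\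
  ~ local_max_at (weight s f o v) tstar.
Proof.
  intros Hs Hf Hv _ Hzero [delta [g [Hdelta Hg]]].
  assert (Dsigma : is_derive (sigma_ray s f o v) tstar 0).
  { apply (is_derive_sigma_ray_zero s f o v tstar g Hzero), Hg.
    rewrite Rminus_diag, Rabs_R0; exact Hdelta. }
  assert (DT := is_derive_exp_opp_RInt (sigma_ray s f o v) tstar
                  (fun x => continuous_sigma_ray s f o v x Hf Hv)).
  assert (Hsigma : sigma_ray s f o v tstar = phi_s s 0)
    by (unfold sigma_ray; now rewrite Hzero).
  assert (Hneg : - transmittance s f o v tstar * (phi_s s 0) ^ 2 < 0).
  { pose proof (exp_pos (- RInt (sigma_ray s f o v) 0 tstar)).
    assert (0 < (s / 4) ^ 2) by (apply pow_lt; lra).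
    unfold transmittance; rewrite phi_s_0; nra. }
  assert (Dw : is_derive (weight s f o v) tstar
                 (- transmittance s f o v tstar * (phi_s s 0) ^ 2)).
  { pose proof (is_derive_mult _ _ _ _ _ DT Dsigma Rmult_comm) as D.
    unfold plus, mult in D; cbn in D; rewrite Hsigma in D.
    replace (- transmittance s f o v tstar * phi_s s 0 ^ 2)
      with (- transmittance s f o v tstar * phi_s s 0 * phi_s s 0
            + transmittance s f o v tstar * 0) by ring.
    exact D. }
  split; [exact Dw | split; [exact Hneg |]].
  apply (not_local_max_at_is_derive _ _ _ Dw); lra.
Qed.
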